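(* Let $p,q$ be odd primes with $q-p=2$ and $p\equiv 3\pmod 4$. Let $K=\mathbb{Q}(\sqrt{-1})$, $i=\sqrt{-1}$, $\pi_2=1-i$, and write $q=\mu\bar\mu$ with $\mu,\bar\mu\in\mathbb{Z}[i]$ conjugate irreducible elements. Let $\varepsilon\in\{1,-1\}$ and $E=E_\varepsilon: y^2=x(x+\varepsilon p)(x+\varepsilon q)$. Then: (1) if $d\in K(S,2)$ satisfies one of (a) $\mu\mid d$, (b) $\bar\mu\mid d$, (c) $p\mid d$, (d) $\pi_2\mid d$, then $d\notin S^{(\varphi)}(E/K)$; (2) $i\in S^{(\varphi)}(E/K)$ iff $p\equiv 7\pmod 8$.
   Context: Let $E'=E'_\varepsilon: y^2=x^3-2\varepsilon(p+q)x^2+4x$ and $\varphi:E\to E'$, $(x,y)\mapsto(y^2/x^2,y(pq-x^2)/x^2)$. Let $S=\{\infty\}\cup\{$primes of $K$ dividing $2pq\}$ and $K(S,2)=\{d\in K^*/K^{*2}:\ \mathrm{ord}_v(d)$ even for all $v\notin S\}=\langle i,\pi_2,\mu,\bar\mu,p\rangle$. The $\varphi$-Selmer group is identified with $S^{(\varphi)}(E/K)=\{d\in K(S,2): C_d(K_v)\neq\emptyset\ \forall v\in S\}$, where $C_d: dw^2=d^2-2\varepsilon(p+q)dz^2+4z^4$. ''$\pi\mid d$'' means $\mathrm{ord}_\pi(d)$ is odd. *)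

(* K = Q(i) is realised inside algC (algebraic complex numbers). *)
From mathcomp Require Import all_boot all_order all_algebra.
From mathcomp Require Import algC.
Set Implicit Arguments. Unset Strict Implicit. Unset Printing Implicit Defensive.
Import Order.TTheory GRing.Theory Num.Theory.
Local Open Scope ring_scope.

Definition Zi (x : algC) : Prop := exists a b : int, x = a%:~R + 'i * b%:~R.
Definition Kq (x : algC) : Prop := exists a b : rat, x = ratr a + 'i * ratr b.

Definition gdvd (a b : algC) : Prop := exists c, Zi c /\ b = a * c.
Definition gunit (u : algC) : Prop := Zi u /\ gdvd u 1.

Definition girred (m : algC) : Prop :=
  [/\ Zi m, m != 0, ~ gunit m &
      forall b c, Zi b -> Zi c -> m = b * c -> gunit b \/ gunit c].
Definition gprime (m : algC) : Prop :=
  [/\ Zi m, m != 0, ~ gunit m &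
      forall a b, Zi a -> Zi b -> gdvd m (a * b) -> gdvd m a \/ gdvd m b].

(* "pi | d" in the paper's sense: ord_pi(d) is odd (d in K^* ). *)
Definition ord_odd (pi d : algC) : Prop :=
  exists (k : int) (a b : algC),
    [/\ Zi a /\ Zi b, ~ gdvd pi a, ~ gdvd pi b,
        d = pi ^ k * a / b & odd `|k|%N].

(* ord_pi(x) >= N, for x in K (x = 0 allowed). *)
Definition vge (pi x : algC) (N : nat) : Prop :=
  exists a b, [/\ Zi a, Zi b, ~ gdvd pi b & x = pi ^+ N * a / b].

(* pi-adic Cauchy sequences of elements of K, and pi-adic null sequences:
   the completion K_pi is the space of such Cauchy sequences modulo null ones. *)
Definition vcauchy (pi : algC) (u : nat -> algC) : Prop :=
  (forall n, Kq (u n)) /\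
  forall N : nat, exists M : nat, forall m n : nat,
      (M <= m)%N -> (M <= n)%N -> vge pi (u m - u n) N.
Definition vnull (pi : algC) (u : nat -> algC) : Prop :=
  forall N : nat, exists M : nat, forall n : nat, (M <= n)%N -> vge pi (u n) N.

Definition Cd_eq (eps : int) (p q : nat) (d z w : algC) : algC :=
  d * w ^+ 2 - (d ^+ 2 - 2 * eps%:~R * (p + q)%:R * d * z ^+ 2 + 4 * z ^+ 4).

(* C_d(K_pi) <> empty, for a finite prime pi : a point (z,w) in K_pi^2, where
   z, w are given by pi-adic Cauchy sequences in K. *)
Definition loc_solv (pi : algC) (eps : int) (p q : nat) (d : algC) : Prop :=
  exists z w : nat -> algC,
    [/\ vcauchy pi z, vcauchy pi w & vnull pi (fun n => Cd_eq eps p q d (z n) (w n))].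

(* C_d(K_infty) <> empty : K_infty = C (K is imaginary quadratic); we use
   the algebraically closed field algC. *)
Definition inf_solv (eps : int) (p q : nat) (d : algC) : Prop :=
  exists z w : algC, Cd_eq eps p q d z w = 0.

(* d represents an element of K(S,2), S = {infty} u {primes dividing 2pq}. *)
Definition in_KS2 (p q : nat) (d : algC) : Prop :=
  [/\ Kq d, d != 0 &
      forall pi, gprime pi -> ~ gdvd pi (2 * p * q)%:R -> ~ ord_odd pi d].

Definition selmer_phi (eps : int) (p q : nat) (d : algC) : Prop :=
  [/\ in_KS2 p q d, inf_solv eps p q d &
      forall pi, gprime pi -> gdvd pi (2 * p * q)%:R -> loc_solv pi eps p q d].

From mathcomp Require Import all_boot all_order all_algebra all_field algC.
From mathcomp Require Import zify ring lra.
From Stdlib Require Import Classical_Prop.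
Set Implicit Arguments. Unset Strict Implicit. Unset Printing Implicit Defensive.
Import Order.TTheory GRing.Theory Num.Theory.
Local Open Scope ring_scope.

(* If [ord_pi d] is odd at a prime [pi | 2pq], then on [C_d] the term [d w^2] has
   odd order while [d^2 - A d z^2 + 4 z^4] (with [A = 2 eps (p + q)]) has even order at most
   [2 ord_pi d]: its outer terms have distinct even orders and the middle one lies strictly
   above their mean.  So [d w^2 - (...)] cannot tend to [0] pi-adically.  For [d = i], [C_i] has a point with constant [z] wherever [i] (resp., at [1 - i],
   [eps (p + 1) - 1]) is a square; at [p = 3 mod 4], at the factors of [q = 1 mod 8], and at
   [1 - i] when [p = 7 mod 8], an approximate square root exists and Newton's iteration
   refines it.  If [p = 3 mod 8] then [q = 5 mod 8], and completing the square turns [C_i]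
   into [i w^2 = Y^2 + p q] with [ord_mu (p q) = 1]; parity of orders forces [ord w = ord Y],
   and then [i] would be a square modulo [mu], i.e. a square root of [-1] would be a square
   in [F_q], which fails for [q = 5 mod 8]. *)

(** * Gaussian integers *)

Lemma conjC_int (n : int) : (n%:~R : algC)^* = n%:~R. Proof. exact: rmorph_int. Qed.

Lemma natzR (R : pzRingType) (n : nat) : ((n%:Z)%:~R : R) = n%:R. Proof. by []. Qed.

Lemma Zi_int (n : int) : Zi n%:~R.
Proof. by exists n, 0; rewrite mulr0 addr0. Qed.

Lemma Zi_nat (n : nat) : Zi n%:R. Proof. exact: (Zi_int n). Qed.

Lemma Zi0 : Zi 0. Proof. exact: (Zi_nat 0). Qed.
Lemma Zi1 : Zi 1. Proof. exact: (Zi_nat 1). Qed.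
Lemma Zi_i : Zi 'i. Proof. by exists 0, 1; rewrite mulr1 add0r. Qed.

Lemma ZiD x y : Zi x -> Zi y -> Zi (x + y).
Proof. by move=> [a [b ->]] [c [d ->]]; exists (a + c), (b + d); rewrite !rmorphD /=; ring. Qed.

Lemma ZiN x : Zi x -> Zi (- x).
Proof. by move=> [a [b ->]]; exists (- a), (- b); rewrite !rmorphN /=; ring. Qed.

Lemma ZiB x y : Zi x -> Zi y -> Zi (x - y).
Proof. by move=> hx hy; apply/ZiD/ZiN. Qed.

Lemma Zi_coordM (a b c d : int) :
  (a%:~R + 'i * b%:~R) * (c%:~R + 'i * d%:~R) =
  (a * c - b * d)%:~R + 'i * (a * d + b * c)%:~R :> algC.
Proof. by rewrite !(rmorphB, rmorphD, rmorphM) /=; ring: (mulCii algC). Qed.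

Lemma ZiM x y : Zi x -> Zi y -> Zi (x * y).
Proof. by move=> [a [b ->]] [c [d ->]]; rewrite Zi_coordM; eexists; eexists. Qed.

Lemma ZiX x n : Zi x -> Zi (x ^+ n).
Proof. by move=> hx; elim: n => [|n IH]; [exact: Zi1 | rewrite exprS; apply: ZiM]. Qed.

Lemma ZiC x : Zi x -> Zi x^*.
Proof.
move=> [a [b ->]]; exists a, (- b).
by rewrite rmorphD rmorphM /= conjCi !conjC_int rmorphN /=; ring.
Qed.

Lemma Zi_coord_inj a b c d :
  a%:~R + 'i * b%:~R = c%:~R + 'i * d%:~R :> algC -> a = c /\ b = d.
Proof.
move=> e; split.
  by have := congr1 (@Re _) e; rewrite !Re_rect ?realz // => /intr_inj.
by have := congr1 (@Im _) e; rewrite !Im_rect ?realz // => /intr_inj.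
Qed.

Lemma Zi_normE (a b : int) :
  (a%:~R + 'i * b%:~R) * (a%:~R + 'i * b%:~R)^* = (a ^+ 2 + b ^+ 2)%:~R :> algC.
Proof.
by rewrite rmorphD rmorphM /= conjCi !conjC_int rmorphD !rmorphXn /=; ring: (mulCii algC).
Qed.

Lemma Zi_norm_nat x : Zi x -> exists n : nat, x * x^* = n%:R.
Proof.
move=> [a [b ->]]; exists (absz (a ^+ 2 + b ^+ 2)); rewrite Zi_normE.
have h : 0 <= a ^+ 2 + b ^+ 2 by rewrite addr_ge0 // sqr_ge0.
by rewrite -[RHS]/(((absz _)%:Z)%:~R) abszE ger0_norm.
Qed.

Lemma normCM (x y : algC) : (x * y) * (x * y)^* = (x * x^*) * (y * y^*).
Proof. by rewrite rmorphM /=; ring. Qed.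

Lemma Kq_Zi x : Zi x -> Kq x.
Proof. by move=> [a [b ->]]; exists a%:~R, b%:~R; rewrite !ratr_int. Qed.

Lemma KqB x y : Kq x -> Kq y -> Kq (x - y).
Proof. by move=> [a [b ->]] [c [d ->]]; exists (a - c), (b - d); rewrite !rmorphB /=; ring. Qed.

Lemma KqM x y : Kq x -> Kq y -> Kq (x * y).
Proof.
move=> [a [b ->]] [c [d ->]]; exists (a * c - b * d), (a * d + b * c).
by rewrite !(rmorphB, rmorphD, rmorphM) /=; ring: (mulCii algC).
Qed.

Lemma Kq_frac x : Kq x -> exists X Y, [/\ Zi X, Zi Y, Y != 0 & x = X / Y].
Proof.
move=> [r1 [r2 ->]].
exists ((numq r1 * denq r2)%:~R + 'i * (numq r2 * denq r1)%:~R), (denq r1 * denq r2)%:~R.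
split; [by eexists; eexists | exact: Zi_int | |].
  by rewrite intr_eq0 mulf_eq0 negb_or !denq_neq0.
have d1 : (denq r1)%:~R != 0 :> algC by rewrite intr_eq0 denq_neq0.
have d2 : (denq r2)%:~R != 0 :> algC by rewrite intr_eq0 denq_neq0.
by rewrite /ratr !rmorphM /=; field; rewrite d1 d2.
Qed.

Lemma KqV x : Kq x -> Kq x^-1.
Proof.
move=> /Kq_frac [X [Y [hX hY Y0 ->]]]; rewrite invf_div.
have [->|X0] := eqVneq X 0; first by rewrite invr0 mulr0; exact: Kq_Zi Zi0.
have -> : Y / X = Y * X^* / (X * X^*).
  by field; rewrite conjC_eq0 X0.
have [n ->] := Zi_norm_nat hX.
apply: KqM; first exact/Kq_Zi/ZiM/ZiC.
by exists n%:R^-1, 0; rewrite fmorphV rmorph_nat rmorph0 mulr0 addr0.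
Qed.

Lemma Kq_div x y : Kq x -> Kq y -> Kq (x / y).
Proof. by move=> hx /KqV; apply: KqM. Qed.

Lemma gdvd0 pi : gdvd pi 0.
Proof. by exists 0; split; [exact: Zi0 | rewrite mulr0]. Qed.

Lemma gdvdxx pi : gdvd pi pi.
Proof. by exists 1; split; [exact: Zi1 | rewrite mulr1]. Qed.

Lemma gdvdMr pi x y : gdvd pi x -> Zi y -> gdvd pi (x * y).
Proof. by move=> [u [hu ->]] hy; exists (u * y); split; [exact: ZiM | rewrite mulrA]. Qed.

Lemma gdvdD pi x y : gdvd pi x -> gdvd pi y -> gdvd pi (x + y).
Proof. by move=> [u [hu ->]] [v [hv ->]]; exists (u + v); split; [exact: ZiD | rewrite mulrDr]. Qed.

Lemma gdvdN pi x : gdvd pi x -> gdvd pi (- x).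
Proof. by move=> [u [hu ->]]; exists (- u); split; [exact: ZiN | rewrite mulrN]. Qed.

Lemma gdvdB pi x y : gdvd pi x -> gdvd pi y -> gdvd pi (x - y).
Proof. by move=> h1 /gdvdN; apply: gdvdD. Qed.

Lemma gdvd_neq0 pi b : ~ gdvd pi b -> b != 0.
Proof. by move=> h; apply/eqP => b0; apply: h; rewrite b0; exact: gdvd0. Qed.

Lemma gunitP c : Zi c -> gunit c <-> c * c^* = 1.
Proof.
move=> hc; split=> [[_ [d [hd e]]]|e]; last first.
  by split=> //; exists c^*; split; [exact: ZiC | rewrite e].
have [n hn] := Zi_norm_nat hc; have [m hm] := Zi_norm_nat hd.
have : (n * m)%:R = 1 :> algC by rewrite natrM -hn -hm -normCM -e rmorph1 mulr1.
by move/eqP; rewrite -[1 : algC]/(1%:R) eqr_nat muln_eq1 => /andP[/eqP n1 _]; rewrite hn n1.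
Qed.

Lemma gunit_i : gunit 'i.
Proof. by apply/gunitP; [exact: Zi_i | rewrite conjCi mulrN mulCii opprK]. Qed.

Section GaussianPrime.

Variable pi : algC.
Hypothesis pi_prime : gprime pi.

Lemma gprime_Zi : Zi pi. Proof. by case: pi_prime. Qed.
Lemma gprime_neq0 : pi != 0. Proof. by case: pi_prime. Qed.
Lemma gprime_ndvd1 : ~ gdvd pi 1. Proof. by case: pi_prime => hZ _ hnu _ h; apply: hnu. Qed.

Lemma gprimeP a b : Zi a -> Zi b -> gdvd pi (a * b) -> gdvd pi a \/ gdvd pi b.
Proof. by case: pi_prime => _ _ _; apply. Qed.

Lemma gprime_ndvdM a b : Zi a -> Zi b -> ~ gdvd pi a -> ~ gdvd pi b -> ~ gdvd pi (a * b).
Proof. by move=> ha hb na nb /(gprimeP ha hb) []. Qed.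

Lemma gprime_ndvd_unit u : gunit u -> ~ gdvd pi u.
Proof.
move=> [hu [v [hv e]]] hd; apply: gprime_ndvd1.
by rewrite e; apply: gdvdMr.
Qed.

Lemma gprime_norm : exists n : nat, pi * pi^* = n%:R /\ (2 <= n)%N.
Proof.
case: pi_prime => hZ hnz hnu _; have [[|[|n]] hn] := Zi_norm_nat hZ; last by exists n.+2.
  by move/eqP: hn; rewrite mulf_eq0 conjC_eq0 orbb (negPf hnz).
by case: hnu; apply/gunitP.
Qed.

Lemma factor_gprime x : Zi x -> x != 0 ->
  exists (e : nat) c, [/\ Zi c, ~ gdvd pi c & x = pi ^+ e * c].
Proof.
move=> hx x0; have [N [hN N2]] := gprime_norm; have [n hn] := Zi_norm_nat hx.
elim: n {-2}n (leqnn n) x hx x0 hn => [|n IH] k hk x hx x0 hn.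
  move: hk hn; rewrite leqn0 => /eqP -> /eqP.
  by rewrite mulf_eq0 conjC_eq0 orbb (negPf x0).
have [[c [hc ec]]|nd] := classic (gdvd pi x); last first.
  by exists 0%N, x; rewrite expr0 mul1r.
have c0 : c != 0 by apply: contraNneq x0 => c0; rewrite ec c0 mulr0.
have [m hm] := Zi_norm_nat hc.
have ekm : k = (N * m)%N.
  by apply/eqP; rewrite -(eqr_nat algC) natrM -hN -hm -hn ec normCM.
have m0 : (0 < m)%N.
  by case: m hm {ekm} => // /eqP; rewrite mulf_eq0 conjC_eq0 orbb (negPf c0).
have [e [d [hd nd ed]]] := IH m ltac:(rewrite -ltnS; apply: leq_trans hk; nia) c hc c0 hm.
by exists e.+1, d; rewrite ec ed exprS mulrA.
Qed.

End GaussianPrime.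

(** * Valuations *)

Section Valuation.

Variable pi : algC.
Hypothesis pi_prime : gprime pi.

Definition ord_ge (x : algC) (n : int) :=
  exists a b, [/\ Zi a, Zi b, ~ gdvd pi b & x = pi ^ n * a / b].

Definition ord_eq (x : algC) (n : int) :=
  exists a b, [/\ Zi a, Zi b, ~ gdvd pi a, ~ gdvd pi b & x = pi ^ n * a / b].

Lemma vgeE x (N : nat) : vge pi x N <-> ord_ge x N.
Proof. by []. Qed.

Lemma ord_oddE d : ord_odd pi d <-> exists k, ord_eq d k /\ odd `|k|%N.
Proof.
split=> [[k [a [b [[ha hb] na nb ed ok]]]] | [k [[a [b [ha hb na nb ed]]] ok]]].
  by exists k; split=> //; exists a, b.
by exists k, a, b.
Qed.

Let pi_expz_neq0 (n : int) : pi ^ n != 0.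
Proof. by rewrite expfz_eq0 negb_and gprime_neq0 ?orbT. Qed.

Let expz_split (m n : int) : m <= n ->
  exists k : nat, pi ^ n = pi ^ m * pi ^+ k /\ n = m + k%:Z.
Proof.
move=> le; exists (absz (n - m)).
have e : (absz (n - m))%:Z = n - m by rewrite abszE ger0_norm // subr_ge0.
split; last by rewrite e; ring.
by rewrite exprnP e -expfzDr ?gprime_neq0 //; congr (_ ^ _); ring.
Qed.

Lemma ord_eq_ge x n : ord_eq x n -> ord_ge x n.
Proof. by move=> [a [b [? ? ? ? ?]]]; exists a, b. Qed.

Lemma ord_eq_Zi x : Zi x -> ~ gdvd pi x -> ord_eq x 0.
Proof.
move=> hx nx; exists x, 1; split; [done | exact: Zi1 | done | exact: gprime_ndvd1 |].
by rewrite expr0z mul1r divr1.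
Qed.

Lemma ord_eq_unit u : gunit u -> ord_eq u 0.
Proof. by move=> hu; apply: ord_eq_Zi; [case: hu | exact: gprime_ndvd_unit]. Qed.

Lemma ord_ge_Zi x : Zi x -> ord_ge x 0.
Proof.
move=> hx; exists x, 1; split; [done | exact: Zi1 | exact: gprime_ndvd1 |].
by rewrite expr0z mul1r divr1.
Qed.

Lemma ord_ge0 n : ord_ge 0 n.
Proof.
exists 0, 1; split; [exact: Zi0 | exact: Zi1 | exact: gprime_ndvd1 |].
by rewrite mulr0 mul0r.
Qed.

Lemma ord_ge1P x : Zi x -> ord_ge x 1 <-> gdvd pi x.
Proof.
move=> hx; split=> [[a [b [ha hb nb ex]]] | [c [hc ->]]]; last first.
  exists c, 1; split; [done | exact: Zi1 | exact: gprime_ndvd1 |].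
  by rewrite expr1z divr1.
have : gdvd pi (x * b) by exists a; split=> //; rewrite ex expr1z mulfVK ?(gdvd_neq0 nb).
by case/(gprimeP pi_prime hx hb).
Qed.

Lemma ord_geN x n : ord_ge x n -> ord_ge (- x) n.
Proof.
move=> [a [b [ha hb nb ->]]]; exists (- a), b; split=> //; first exact: ZiN.
by rewrite mulrN mulNr.
Qed.

Lemma ord_eqN x n : ord_eq x n -> ord_eq (- x) n.
Proof.
move=> [a [b [ha hb na nb ->]]]; exists (- a), b; split=> //.
- exact: ZiN.
- by move=> /gdvdN; rewrite opprK.
by rewrite mulrN mulNr.
Qed.

Lemma ord_geD x y n : ord_ge x n -> ord_ge y n -> ord_ge (x + y) n.
Proof.
move=> [a [b [ha hb nb ->]]] [c [d [hc hd nd ->]]].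
exists (a * d + c * b), (b * d); split.
- by apply: ZiD; apply: ZiM.
- exact: ZiM.
- exact: gprime_ndvdM.
by field; rewrite (gdvd_neq0 nb) (gdvd_neq0 nd).
Qed.

Lemma ord_geB x y n : ord_ge x n -> ord_ge y n -> ord_ge (x - y) n.
Proof. by move=> hx /ord_geN; apply: ord_geD. Qed.

Lemma ord_geM x y m n : ord_ge x m -> ord_ge y n -> ord_ge (x * y) (m + n).
Proof.
move=> [a [b [ha hb nb ->]]] [c [d [hc hd nd ->]]].
exists (a * c), (b * d); split; [exact: ZiM | exact: ZiM | exact: gprime_ndvdM |].
by rewrite expfzDr ?gprime_neq0 // invfM; ring.
Qed.

Lemma ord_eqM x y m n : ord_eq x m -> ord_eq y n -> ord_eq (x * y) (m + n).
Proof.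
move=> [a [b [ha hb na nb ->]]] [c [d [hc hd nc nd ->]]].
exists (a * c), (b * d); split; try exact: ZiM; try exact: gprime_ndvdM.
by rewrite expfzDr ?gprime_neq0 // invfM; ring.
Qed.

Lemma ord_eqX x m k : ord_eq x m -> ord_eq (x ^+ k) (m * k%:Z).
Proof.
move=> h; elim: k => [|k IH].
  by rewrite expr0 mulr0; apply: ord_eq_Zi Zi1 (gprime_ndvd1 pi_prime).
by rewrite exprS -addn1 PoszD mulrDr mulr1 addrC; apply: ord_eqM.
Qed.

Lemma ord_eqV x m : ord_eq x m -> ord_eq x^-1 (- m).
Proof.
move=> [a [b [ha hb na nb ->]]]; exists b, a; split=> //.
by rewrite !invfM invrK -exprz_inv exprz_inv -invr_expz; ring.
Qed.

Lemma ord_ge_div x y m n : ord_ge x m -> ord_eq y n -> ord_ge (x / y) (m - n).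
Proof. by move=> hx /ord_eqV /ord_eq_ge; apply: ord_geM. Qed.

Lemma ord_ge_le x m n : ord_ge x n -> m <= n -> ord_ge x m.
Proof.
move=> [a [b [ha hb nb ->]]] /expz_split [k [-> _]].
exists (pi ^+ k * a), b; split=> //; last by ring.
by apply: ZiM => //; apply/ZiX/gprime_Zi.
Qed.

Lemma ord_eq_ge_le x m n : ord_eq x m -> ord_ge x n -> n <= m.
Proof.
move=> [a [b [ha hb na nb ex]]] [c [d [hc hd nd ey]]]; rewrite leNgt.
apply/negP => /[dup] lt /ltW /expz_split [k [ek ekk]].
have k0 : (0 < k)%N by move: lt; rewrite ekk; case: k {ek ekk} => //; rewrite addr0 ltxx.
have e : a * d = pi * (pi ^+ k.-1 * c * b).
  have b0 := gdvd_neq0 nb; have d0 := gdvd_neq0 nd.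
  have : pi ^ m * a / b * (b * d) = pi ^ m * pi ^+ k * c / d * (b * d) by rewrite -ek -ey -ex.
  have -> : pi ^ m * a / b * (b * d) = pi ^ m * (a * d) by field.
  have -> : pi ^ m * pi ^+ k * c / d * (b * d) = pi ^ m * (pi ^+ k * c * b) by field.
  by move/(mulfI (pi_expz_neq0 m)) => ->; rewrite -{1}(prednK k0) exprS !mulrA.
apply: (gprime_ndvdM pi_prime ha hd na nd); exists (pi ^+ k.-1 * c * b); split => //.
by apply: ZiM => //; apply: ZiM => //; apply/ZiX/gprime_Zi.
Qed.

Lemma ord_eq_uniq x m n : ord_eq x m -> ord_eq x n -> m = n.
Proof.
move=> hm hn; apply/eqP.
by rewrite eq_le (ord_eq_ge_le hn (ord_eq_ge hm)) (ord_eq_ge_le hm (ord_eq_ge hn)).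
Qed.

Lemma ord_eq_neq0 x m : ord_eq x m -> x != 0.
Proof.
move=> [a [b [_ _ na nb ->]]].
by rewrite !mulf_neq0 ?invr_neq0 ?(gdvd_neq0 na) ?(gdvd_neq0 nb).
Qed.

Lemma ord_eqD_lt x y m n : ord_eq x m -> ord_ge y n -> m < n -> ord_eq (x + y) m.
Proof.
move=> [a [b [ha hb na nb ->]]] [c [d [hc hd nd ->]]] /[dup] lt /ltW /expz_split [k [-> ekk]].
have k0 : (0 < k)%N by move: lt; rewrite ekk; case: k {ekk} => //; rewrite addr0 ltxx.
have hpk : gdvd pi (pi ^+ k * c * b).
  rewrite -(prednK k0) exprS -!mulrA; apply: gdvdMr; first exact: gdvdxx.
  by apply: ZiM; [apply/ZiX/gprime_Zi | apply: ZiM].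
exists (a * d + pi ^+ k * c * b), (b * d); split.
- by apply: ZiD; apply: ZiM => //; apply: ZiM => //; apply/ZiX/gprime_Zi.
- exact: ZiM.
- move=> h; apply: (gprime_ndvdM pi_prime ha hd na nd).
  by have := gdvdB h hpk; rewrite addrK.
- exact: gprime_ndvdM.
by set t := pi ^ m; set u := pi ^+ k; field; rewrite (gdvd_neq0 nb) (gdvd_neq0 nd).
Qed.

Lemma ord_eqD_neq x y m n : ord_eq x m -> ord_eq y n -> m != n ->
  ord_eq (x + y) (Num.min m n).
Proof.
move=> hx hy; rewrite neq_lt => /orP[] lt.
  have -> : Num.min m n = m by lia.
  exact: ord_eqD_lt (ord_eq_ge hy) lt.
have -> : Num.min m n = n by lia.
by rewrite addrC; apply: ord_eqD_lt (ord_eq_ge hx) lt.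
Qed.

Lemma ord_eq_exists x : Kq x -> x != 0 -> exists m, ord_eq x m.
Proof.
move=> /Kq_frac [X [Y [hX hY Y0 ->]]]; rewrite mulf_eq0 invr_eq0 (negPf Y0) orbF => X0.
have [e1 [c1 [h1 n1 ->]]] := factor_gprime pi_prime hX X0.
have [e2 [c2 [h2 n2 ->]]] := factor_gprime pi_prime hY Y0.
exists (e1%:Z - e2%:Z), c1, c2; split => //.
have v0 : pi ^+ e2 != 0 by rewrite expf_neq0 ?gprime_neq0.
rewrite expfzDr ?gprime_neq0 // -exprnN -exprnP; set u := pi ^+ e1; set v := pi ^+ e2.
by field; rewrite v0 (gdvd_neq0 n2).
Qed.

Lemma ord_geB_neq x y m n N : ord_eq x m -> ord_eq y n -> m != n ->
  ord_ge (x - y) N -> N <= Num.min m n.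
Proof. by move=> hx /ord_eqN hy mn; apply: ord_eq_ge_le; apply: ord_eqD_neq hx hy mn. Qed.

End Valuation.

(** * Odd orders are obstructed *)

Definition quartic (A d z : algC) := d ^+ 2 - A * d * z ^+ 2 + 4 * z ^+ 4.

Lemma Cd_eqE eps p q d z w :
  Cd_eq eps p q d z w = d * w ^+ 2 - quartic (2 * eps%:~R * (p + q)%:R) d z.
Proof. by []. Qed.

Section OddOrder.

Variables (pi A : algC) (j : int).
Hypotheses (pi_prime : gprime pi) (ord4 : ord_eq pi 4 (4 * j)) (ordA : ord_ge pi A (2 * j)).

Lemma ord_quartic_even d k z : ord_eq pi d k -> odd `|k|%N -> Kq z ->
  exists t : int, ord_eq pi (quartic A d z) (2 * t) /\ t <= k.
Proof.
move=> hd ok hz; have hd2 := ord_eqX pi_prime 2 hd.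
have [->|z0] := eqVneq z 0.
  exists k; split; last by [].
  by rewrite /quartic !expr0n /= !(mulr0, subr0, addr0) mulrC.
have [v hv] := ord_eq_exists pi_prime hz z0.
have hz4 : ord_eq pi (4 * z ^+ 4) (4 * j + v * 4%:Z) by apply/ord_eqM/ord_eqX.
have hmid : ord_ge pi (A * d * z ^+ 2) (2 * j + k + v * 2%:Z).
  by apply/ord_geM/ord_eq_ge/ord_eqX => //; apply/ord_geM/ord_eq_ge.
have hout := ord_eqD_neq pi_prime hd2 hz4 ltac:(lia).
exists (Num.min k (2 * j + 2 * v)); split; last by lia.
have -> : quartic A d z = (d ^+ 2 + 4 * z ^+ 4) + - (A * d * z ^+ 2) by rewrite /quartic; ring.
have -> : 2 * Num.min k (2 * j + 2 * v) = Num.min (k * 2%:Z) (4 * j + v * 4%:Z) by lia.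
by apply: (ord_eqD_lt pi_prime hout (ord_geN hmid)); lia.
Qed.

Lemma no_point_odd_order (eps : int) (p q : nat) d k :
  A = 2 * eps%:~R * (p + q)%:R -> ord_eq pi d k -> odd `|k|%N -> ~ loc_solv pi eps p q d.
Proof.
move=> eA hd ok [z [w [[hz _] [hw _] hn]]].
have [M /(_ M (leqnn M))] := hn (absz k).*2.+1.
rewrite vgeE Cd_eqE -eA; have [t [hR tk]] := ord_quartic_even hd ok (hz M).
have [->|w0] := eqVneq (w M) 0.
  by rewrite expr0n mulr0 sub0r => /(ord_eq_ge_le pi_prime (ord_eqN hR)); lia.
have [u hu] := ord_eq_exists pi_prime (hw M) w0.
have hT : ord_eq pi (d * w M ^+ 2) (k + u * 2%:Z) by apply/ord_eqM/ord_eqX.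
by move/(ord_geB_neq pi_prime hT hR); lia.
Qed.

End OddOrder.

(** * Prime fields *)

Section PrimeField.

Variable l : nat.
Hypotheses (l_prime : prime l) (l_odd : odd l).

Lemma Fp_dvdz (n : int) : (l %| n)%Z = ((n%:~R : 'F_l) == 0).
Proof. exact/dvdz_pcharf/pchar_Fp. Qed.

Lemma Fp_int (y : 'F_l) : exists n : int, n%:~R = y.
Proof. by exists (y : nat)%:Z; exact: natr_Zp. Qed.

Lemma Fp2_neq0 : (2%:R : 'F_l) != 0.
Proof.
rewrite -[2%:R]/((2%:Z)%:~R) -Fp_dvdz dvdzE /=; apply/negP => /(@dvdn_leq _ 2 isT).
by case: l l_prime l_odd => [|[|[|]]].
Qed.

Lemma Fp1_neqN1 : (1 : 'F_l) != -1.
Proof. by rewrite -subr_eq0 opprK; exact: Fp2_neq0. Qed.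

Lemma Fp_fermat (x : 'F_l) : x != 0 -> x ^+ l.-1 = 1.
Proof.
move=> x0; apply: (mulIf x0); rewrite mul1r -exprSr prednK ?prime_gt0 //.
by rewrite -[X in x ^+ X](card_Fp l_prime) expf_card.
Qed.

Lemma Fp_sqr_exp_half (s : 'F_l) : s != 0 -> (s ^+ 2) ^+ l./2 = 1.
Proof.
move=> s0; rewrite -exprM -(Fp_fermat s0); congr (_ ^+ _).
by rewrite -{2}(odd_double_half l) l_odd -muln2 mulnC.
Qed.

Lemma Fp_sqr_neqN1 (s : 'F_l) : (l %% 4 = 3)%N -> s ^+ 2 != -1.
Proof.
move=> l4; apply/eqP => hs.
have s0 : s != 0 by apply: contra_eq_neq hs => ->; rewrite expr0n eq_sym oppr_eq0 oner_eq0.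
have := Fp_sqr_exp_half s0; rewrite hs -signr_odd.
have -> : odd l./2 by have := divn_eq l 4; rewrite l4; lia.
by move=> /esym/eqP; rewrite expr1 (negPf Fp1_neqN1).
Qed.

Section SqrtN1.

Variable r : 'F_l.
Hypothesis r_sqrtN1 : r ^+ 2 = -1.

Lemma Fp_sqrtN1_nonsqr (s : 'F_l) : (l %% 8 = 5)%N -> s ^+ 2 != r.
Proof.
move=> l8; apply/eqP => hs.
have s0 : s != 0.
  apply/eqP => s0; move/eqP: r_sqrtN1; rewrite -hs s0 !expr0n /= eq_sym oppr_eq0.
  by rewrite oner_eq0.
have := Fp_sqr_exp_half s0; rewrite hs.
have -> : l./2 = (2 * (l %/ 4)%N)%N by have := divn_eq l 8; rewrite l8; lia.
rewrite exprM r_sqrtN1 -signr_odd.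
have -> : odd (l %/ 4)%N by have := divn_eq l 8; rewrite l8; lia.
by move=> /esym/eqP; rewrite expr1 (negPf Fp1_neqN1).
Qed.

Lemma Fp_fourth_rootN1 : (l %% 8 = 1)%N -> exists y : 'F_l, y ^+ 4 = -1.
Proof.
move=> l8; set k := (l %/ 8)%N.
have el : l = (8 * k + 1)%N by have := divn_eq l 8; rewrite l8; lia.
have k0 : (0 < k)%N by move: l_prime; rewrite el; case: (k).
have [x [x0 hx]] : exists x : 'F_l, x != 0 /\ x ^+ (4 * k) != 1.
  apply: NNPP => H.
  pose P : {poly 'F_l} := 'X^(4 * k) - 1.
  have sP : size P = (4 * k).+1 by rewrite size_Xn_sub_1 //; lia.
  have P0 : P != 0 by rewrite -size_poly_eq0 sP.
  have hall : all (root P) (enum [set~ (0 : 'F_l)]).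
    apply/allP => y; rewrite mem_enum in_setC1 => y0; rewrite /root /P !hornerE subr_eq0.
    by apply: contraT => hy; case: H; exists y.
  have := max_poly_roots P0 hall (enum_uniq _).
  by rewrite -cardE cardsC1 sP card_Fp // el; lia.
exists (x ^+ k); have : (x ^+ k ^+ 4) ^+ 2 == 1.
  by rewrite -!exprM -(Fp_fermat x0); apply/eqP; congr (_ ^+ _); lia.
by rewrite sqrf_eq1 -exprM mulnC (negPf hx) => /eqP.
Qed.

Lemma Fp_sqrtN1_sqr : (l %% 8 = 1)%N -> exists s : 'F_l, s ^+ 2 = r.
Proof.
move=> /Fp_fourth_rootN1 [y hy].
have : r ^+ 2 == (y ^+ 2) ^+ 2 by rewrite -exprM hy r_sqrtN1.
rewrite eqf_sqr => /orP[] /eqP ->; first by exists y.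
by exists (y ^+ 3); rewrite -exprM -[(3 * 2)%N]/(4 + 2)%N exprD hy mulN1r.
Qed.

End SqrtN1.

End PrimeField.

Lemma Fp_two_sqr_sign l : prime l -> (l %% 4 = 3)%N ->
  exists x : int, (2 * x ^+ 2)%:~R = 1 :> 'F_l \/ (2 * x ^+ 2)%:~R = -1 :> 'F_l.
Proof.
move=> hl l4; have ol : odd l by lia.
set x : int := 2 ^+ (l %/ 4)%N; set c : 'F_l := (2 * x ^+ 2)%:~R.
have : c ^+ 2 == 1.
  rewrite /c /x intrM !rmorphXn /= !rmorph_nat -exprM -exprS -exprM.
  have -> : ((l %/ 4 * 2).+1 * 2 = l.-1)%N by have := divn_eq l 4; rewrite l4; lia.
  by rewrite (Fp_fermat hl (Fp2_neq0 hl ol)).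
by rewrite sqrf_eq1 => /orP[] /eqP; exists x; [left|right].
Qed.

(** * Gaussian primes over [2 p q] *)

Lemma gprime_assoc pi X : gprime pi -> gprime X -> gdvd pi X -> exists c, gunit c /\ X = pi * c.
Proof.
move=> hpi hX [c [hc eX]]; exists c; split=> //.
have [hZ X0 _ hXP] := hX; have pi0 := gprime_neq0 hpi.
have c0 : c != 0 by apply: contraNneq X0 => c0; rewrite eX c0 mulr0.
have [|[e [he ec]]] := hXP _ _ (gprime_Zi hpi) hc ltac:(rewrite -eX; exact: gdvdxx).
  move=> [e [he epi]]; split=> //; exists e; split=> //; apply: (mulfI X0).
  by rewrite mulr1 {1}eX epi; ring.
case: (gprime_ndvd1 hpi); exists e; split=> //; apply: (mulfI X0).
by rewrite mulr1 {1}eX ec; ring.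
Qed.

Lemma gprime_ndvd_i pi : gprime pi -> ~ gdvd pi 'i.
Proof. by move=> hpi; apply: gprime_ndvd_unit gunit_i. Qed.

Lemma gprime_ndvd2_odd pi : gprime pi -> ~ gdvd pi 2 -> ~ gdvd pi 4.
Proof.
move=> hpi n2; have -> : 4 = 2 * 2 :> algC by rewrite -natrM.
by apply: gprime_ndvdM => //; exact: (Zi_nat 2).
Qed.

Lemma gdvd_natP (l : nat) (a b : int) :
  gdvd l%:R (a%:~R + 'i * b%:~R) <-> (l %| a)%Z /\ (l %| b)%Z.
Proof.
split=> [[c [[c1 [c2 ->]] e]] | [/dvdzP [c1 ->] /dvdzP [c2 ->]]].
  move: e; have -> : l%:R * (c1%:~R + 'i * c2%:~R) = (l%:Z * c1)%:~R + 'i * (l%:Z * c2)%:~R :> algC.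
    by rewrite !intrM natzR; ring.
  by move=> /Zi_coord_inj [-> ->]; split; apply: dvdz_mulr.
exists (c1%:~R + 'i * c2%:~R); split; first by exists c1, c2.
by rewrite !intrM natzR; ring.
Qed.

Lemma gdvd_nat_int (l : nat) (n : int) : gdvd l%:R n%:~R <-> (l %| n)%Z.
Proof.
rewrite -[n%:~R]addr0 -[0](mulr0 'i) -[0 : algC]/((0 : int)%:~R) gdvd_natP.
by split=> [[] | ?]; last by split; last exact: dvdz0.
Qed.

Lemma dvdz_sum_sqr (l : nat) (a b : int) : prime l -> (l %% 4 = 3)%N ->
  (l %| a ^+ 2 + b ^+ 2)%Z -> (l %| a)%Z /\ (l %| b)%Z.
Proof.
move=> hl l4; have ol : odd l by lia.
rewrite !(Fp_dvdz hl) rmorphD !rmorphXn /= => /eqP h.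
have [b0|b0] := eqVneq (b%:~R : 'F_l) 0.
  by move: h; rewrite b0 expr0n /= addr0 => /eqP; rewrite expf_eq0 /= => ->.
case/negP: (Fp_sqr_neqN1 hl ol ((a%:~R : 'F_l) / b%:~R) l4).
apply/eqP; rewrite expr_div_n; apply: (mulIf (expf_neq0 2 b0)).
by rewrite divfK ?expf_neq0 // mulN1r; apply/eqP; rewrite -addr_eq0 h.
Qed.

Section InertPrime.

Variable l : nat.
Hypotheses (l_prime : prime l) (l4 : (l %% 4 = 3)%N).

Lemma gprime_inert : gprime l%:R.
Proof.
split.
- exact: Zi_nat.
- by rewrite pnatr_eq0 -lt0n prime_gt0.
- move=> /(gunitP (Zi_nat l)); rewrite conjC_nat -natrM -[1]/(1%:R) => /eqP.
  by rewrite eqr_nat muln_eq1 andbb => /eqP l1; move: l_prime; rewrite l1.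
move=> x y [a [b ->]] [c [d ->]]; rewrite Zi_coordM !gdvd_natP => -[h1 h2].
have : (l %| (a ^+ 2 + b ^+ 2) * (c ^+ 2 + d ^+ 2))%Z.
  have -> : (a ^+ 2 + b ^+ 2) * (c ^+ 2 + d ^+ 2) = (a * c - b * d) ^+ 2 + (a * d + b * c) ^+ 2.
    by ring.
  by apply: rpredD; rewrite expr2; apply: dvdz_mulr.
rewrite !(Fp_dvdz l_prime) rmorphM mulf_eq0 -!(Fp_dvdz l_prime).
by case/orP => /(dvdz_sum_sqr l_prime l4); [left|right].
Qed.

Lemma inert_ndvd2 : ~ gdvd l%:R 2.
Proof.
rewrite -[2 : algC]/((2%:Z)%:~R) gdvd_nat_int dvdzE /= => /(@dvdn_leq _ 2 isT).
by move: l_prime l4; case: l => [|[|[|]]].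
Qed.

End InertPrime.

Lemma gdvd_1iP (a b : int) :
  gdvd (1 - 'i) (a%:~R + 'i * b%:~R) <-> ~~ odd (absz (a + b)).
Proof.
split=> [[c [[c1 [c2 ->]] e]] | ev].
  move: e; have -> : (1 - 'i) * (c1%:~R + 'i * c2%:~R) = (c1 + c2)%:~R + 'i * (c2 - c1)%:~R :> algC.
    by rewrite intrD intrB; ring: (mulCii algC).
  by move=> /Zi_coord_inj [-> ->]; lia.
set t := ((a + b) %/ 2)%Z; exists ((a - t)%:~R + 'i * t%:~R); split; first by exists (a - t), t.
have -> : b = 2 * t - a by rewrite /t; lia.
by rewrite rmorphB rmorphM /=; ring: (mulCii algC).
Qed.

Lemma gprime_1i : gprime (1 - 'i).
Proof.
have norm1i : (1 - 'i) * (1 - 'i)^* = 2%:R :> algC.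
  by rewrite rmorphB /= conjCi rmorph1; ring: (mulCii algC).
split.
- exact: ZiB Zi1 Zi_i.
- by apply: contra_eq_neq norm1i => ->; rewrite mul0r eq_sym pnatr_eq0.
- move=> /(gunitP (ZiB Zi1 Zi_i)); rewrite norm1i => /eqP.
  by rewrite -[1 : algC]/(1%:R) eqr_nat.
move=> x y [a [b ->]] [c [d ->]]; rewrite Zi_coordM !gdvd_1iP => ev.
have : ~~ odd (absz ((a + b) * (c + d))).
  have -> : (a + b) * (c + d) = a * c - b * d + (a * d + b * c) + 2 * (b * d) by ring.
  by lia.
by rewrite abszM oddM negb_and => /orP[]; [left | right].
Qed.

Section SplitPrime.

Variables (q : nat) (nu : algC).
Hypotheses (q_prime : prime q) (q_odd : odd q) (nu_Zi : Zi nu) (nu_norm : q%:R = nu * nu^*).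

Let q_neq0 : (q%:R : algC) != 0.
Proof. by rewrite pnatr_eq0 -lt0n prime_gt0. Qed.

Lemma split_dvd_intP (n : int) : gdvd nu n%:~R <-> (q %| n)%Z.
Proof.
split=> [[c [hc en]] | /dvdzP [k ->]]; last first.
  exists (k%:~R * nu^*); split; first by apply/ZiM/ZiC; [exact: Zi_int|].
  by rewrite intrM natzR nu_norm; ring.
have [N hN] := Zi_norm_nat hc.
have : (n ^+ 2)%:~R = (q%:Z * N%:Z)%:~R :> algC.
  by rewrite intrM natzR natzR nu_norm -hN rmorphXn /= expr2 -{2}(conjC_int n) en rmorphM /=; ring.
move/intr_inj => e2; have : (q %| n ^+ 2)%Z by rewrite e2 dvdz_mulr.
by rewrite !(Fp_dvdz q_prime) rmorphXn /= expf_eq0.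
Qed.

Lemma split_ndvd_q : ~ gdvd q%:R nu.
Proof.
move=> [c [hc enu]]; have [n hn] := Zi_norm_nat hc.
have : (q * n = 1)%N.
  apply/eqP; rewrite -(eqr_nat algC) natrM -hn; apply/eqP/(mulfI q_neq0).
  by rewrite mulr1 {3}nu_norm enu rmorphM /= conjC_nat; ring.
by move/eqP; rewrite muln_eq1 => /andP[/eqP q1 _]; move: q_prime; rewrite q1.
Qed.

Lemma split_ndvd2 : ~ gdvd nu 2.
Proof.
rewrite -[2 : algC]/((2%:Z)%:~R) => /split_dvd_intP.
by rewrite (Fp_dvdz q_prime) (negPf (Fp2_neq0 q_prime q_odd)).
Qed.

Lemma split_dvd_mul (n : nat) : gdvd nu (n * q)%:R.
Proof.
by exists (n%:R * nu^*); split; [exact/ZiM/ZiC/nu_Zi/Zi_nat | rewrite natrM nu_norm; ring].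
Qed.

Lemma split_coord_ndvd (m1 m2 : int) : nu = m1%:~R + 'i * m2%:~R -> ~ (q %| m2)%Z.
Proof.
move=> enu hm2; apply: split_ndvd_q; rewrite enu gdvd_natP; split=> //.
have : ((m1 ^+ 2 + m2 ^+ 2)%:~R : 'F_q) == 0.
  have -> : m1 ^+ 2 + m2 ^+ 2 = q%:Z.
    by apply: (@intr_inj algC); rewrite natzR nu_norm enu Zi_normE.
  by rewrite -(Fp_dvdz q_prime).
move: hm2; rewrite !(Fp_dvdz q_prime) rmorphD !rmorphXn /= => /eqP ->.
by rewrite expr0n addr0 /= expf_eq0.
Qed.

(* [r] is the image of ['i] in [Z[i]/nu = F_q]. *)
Lemma split_root : exists r : int, (r%:~R : 'F_q) ^+ 2 = -1 /\ gdvd nu ('i - r%:~R).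
Proof.
have [m1 [m2 enu]] := nu_Zi.
have m2nz : (m2%:~R : 'F_q) != 0.
  by rewrite -(Fp_dvdz q_prime); apply/negP; exact: split_coord_ndvd enu.
have [r er] := Fp_int (- (m1%:~R : 'F_q) / m2%:~R).
have hr1 : ((m1 + r * m2)%:~R : 'F_q) = 0 by rewrite rmorphD rmorphM /= er divfK // addrN.
have hsum : ((m1 ^+ 2 + m2 ^+ 2)%:~R : 'F_q) = 0.
  have -> : m1 ^+ 2 + m2 ^+ 2 = q%:Z.
    by apply: (@intr_inj algC); rewrite natzR nu_norm enu Zi_normE.
  by apply/eqP; rewrite -(Fp_dvdz q_prime).
have hr2 : (r%:~R : 'F_q) ^+ 2 = -1.
  have em1 : (m1%:~R : 'F_q) = - r%:~R * m2%:~R.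
    by apply/eqP; rewrite mulNr -addr_eq0 -intrM -intrD hr1.
  move: hsum; rewrite rmorphD !rmorphXn /= em1 mulNr sqrrN exprMn.
  rewrite -{2}[m2%:~R ^+ 2]mul1r -mulrDl => /eqP.
  by rewrite mulf_eq0 expf_eq0 (negPf m2nz) andbF orbF addr_eq0 => /eqP.
have hr3 : ((m2 - r * m1)%:~R : 'F_q) = 0.
  have -> : m2 - r * m1 = m2 * (r ^+ 2 + 1) - r * (m1 + r * m2) by ring.
  by rewrite rmorphB !rmorphM rmorphD rmorphXn /= hr1 hr2 rmorph1 addNr !mulr0 subr0.
have /dvdzP [s2 es2] : (q %| m1 + r * m2)%Z by rewrite (Fp_dvdz q_prime) hr1.
have /dvdzP [s1 es1] : (q %| m2 - r * m1)%Z by rewrite (Fp_dvdz q_prime) hr3.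
exists r; split=> //; exists (s1%:~R + 'i * s2%:~R); split; first by exists s1, s2.
apply: (mulfI q_neq0); rewrite mulrCA -[q%:R]natzR.
have -> : (q%:Z)%:~R * (s1%:~R + 'i * s2%:~R) = (s1 * q%:Z)%:~R + 'i * (s2 * q%:Z)%:~R :> algC.
  by rewrite !intrM; ring.
rewrite -es1 -es2 enu natzR nu_norm enu !(rmorphD, rmorphB, rmorphM) /= conjCi !conjC_int.
by ring: (mulCii algC).
Qed.

Variable r : int.
Hypotheses (r_sqrtN1 : (r%:~R : 'F_q) ^+ 2 = -1) (nu_dvd_ir : gdvd nu ('i - r%:~R)).

Lemma split_congr_int x : Zi x -> exists n : int, gdvd nu (x - n%:~R).
Proof.
move=> [a [b ->]]; exists (a + r * b).
have -> : a%:~R + 'i * b%:~R - (a + r * b)%:~R = ('i - r%:~R) * b%:~R :> algC.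
  by rewrite intrD intrM; ring.
exact/gdvdMr/Zi_int.
Qed.

Lemma gdvd_splitP (a b : int) : gdvd nu (a%:~R + 'i * b%:~R) <-> (q %| a + r * b)%Z.
Proof.
have hb : gdvd nu (('i - r%:~R) * b%:~R) by exact/gdvdMr/Zi_int.
have -> : a%:~R + 'i * b%:~R = (a + r * b)%:~R + ('i - r%:~R) * b%:~R :> algC.
  by rewrite intrD intrM; ring.
rewrite -split_dvd_intP; split=> [h | h]; last exact: gdvdD.
by have := gdvdB h hb; rewrite addrK.
Qed.

Lemma gprime_split : gprime nu.
Proof.
split=> //.
- by apply: contra_eq_neq nu_norm => ->; rewrite mul0r.
- move=> /(gunitP nu_Zi); rewrite -nu_norm -[1 : algC]/(1%:R) => /eqP; rewrite eqr_nat.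
  by move=> /eqP q1; move: q_prime; rewrite q1.
move=> x y [a [b ->]] [c [d ->]]; rewrite Zi_coordM !gdvd_splitP => H.
have : (((a + r * b)%:~R : 'F_q) * (c + r * d)%:~R) == 0.
  rewrite -rmorphM -(Fp_dvdz q_prime).
  have -> : (a + r * b) * (c + r * d) = a * c - b * d + r * (a * d + b * c) + b * d * (r ^+ 2 + 1).
    by ring.
  apply: rpredD => //; apply: dvdz_mull.
  by rewrite (Fp_dvdz q_prime) rmorphD rmorphXn /= r_sqrtN1 rmorph1 addNr.
by rewrite mulf_eq0 -!(Fp_dvdz q_prime) => /orP[]; [left|right].
Qed.

Lemma split_ndvd_conj : ~ gdvd nu nu^*.
Proof.
have [m1 [m2 enu]] := nu_Zi; move=> h; apply: (split_coord_ndvd enu).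
have h2 : gdvd nu ((2 * m2)%:~R).
  have -> : (2 * m2)%:~R = - 'i * (nu - nu^*) :> algC.
    by rewrite enu rmorphD rmorphM /= conjCi !conjC_int intrM; ring: (mulCii algC).
  by rewrite mulrC; apply: gdvdMr; [exact: gdvdB (gdvdxx _) h | exact/ZiN/Zi_i].
move/split_dvd_intP: h2; rewrite !(Fp_dvdz q_prime) rmorphM mulf_eq0 /=.
by rewrite -[2%:~R]/(2%:R) (negPf (Fp2_neq0 q_prime q_odd)).
Qed.

(* The reduction [a + b i |-> a + r b] is a ring morphism onto [F_q], under which ['i] is
   not a square when [q = 5 mod 8]. *)
Lemma split_i_nonsqr A B : (q %% 8 = 5)%N -> Zi A -> Zi B ->
  ~ gdvd nu A -> ~ gdvd nu B -> ~ gdvd nu ('i * A ^+ 2 - B ^+ 2).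
Proof.
move=> q8 hA hB nA nB h.
have [a ha] := split_congr_int hA; have [b hb] := split_congr_int hB.
have hab : (q %| r * a ^+ 2 - b ^+ 2)%Z.
  apply/split_dvd_intP; rewrite intrB intrM !rmorphXn /=.
  have -> : r%:~R * a%:~R ^+ 2 - b%:~R ^+ 2 = ('i * A ^+ 2 - B ^+ 2) - ('i - r%:~R) * A ^+ 2
      - (A - a%:~R) * (r%:~R * (A + a%:~R)) + (B - b%:~R) * (B + b%:~R) :> algC by ring.
  apply: gdvdD; last by apply: gdvdMr hb _; apply: ZiD hB (Zi_int _).
  apply: gdvdB; last by apply: gdvdMr ha _; apply/ZiM/ZiD/Zi_int => //; exact: Zi_int.
  by apply: gdvdB h _; apply: gdvdMr nu_dvd_ir _; apply: ZiX.
have ndvd x n : Zi x -> ~ gdvd nu x -> gdvd nu (x - n%:~R) -> (n%:~R : 'F_q) != 0.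
  move=> hx nx hxn; rewrite -(Fp_dvdz q_prime); apply/negP => /split_dvd_intP hn.
  by apply: nx; have := gdvdD hxn hn; rewrite subrK.
have a0 := ndvd _ _ hA nA ha; have b0 := ndvd _ _ hB nB hb.
case/negP: (Fp_sqrtN1_nonsqr q_prime q_odd r_sqrtN1 (b%:~R / a%:~R) q8); apply/eqP.
rewrite expr_div_n; apply: (mulIf (expf_neq0 2 a0)); rewrite divfK ?expf_neq0 //.
apply/eqP; rewrite eq_sym -subr_eq0.
by move: hab; rewrite (Fp_dvdz q_prime) rmorphB rmorphM !rmorphXn.
Qed.

End SplitPrime.

(** * Hensel's lemma for square roots *)

Section PiAdicSequences.

Variable pi : algC.
Hypothesis pi_prime : gprime pi.

Lemma vcauchy_const c : Kq c -> vcauchy pi (fun _ => c).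
Proof. by move=> hc; split=> // N; exists 0%N => m n _ _; rewrite vgeE subrr; exact: ord_ge0. Qed.

Lemma vcauchyMl c (s : nat -> algC) : Zi c -> vcauchy pi s -> vcauchy pi (fun n => c * s n).
Proof.
move=> hc [hK hC]; split=> [n | N]; first exact/KqM/hK/Kq_Zi.
have [M hM] := hC N; exists M => m n hm hn; rewrite -mulrBr.
move/vgeE: (hM _ _ hm hn) => h.
by have := ord_geM pi_prime (ord_ge_Zi pi_prime hc) h; rewrite add0r.
Qed.

Lemma vcauchy_steps (s : nat -> algC) : (forall n, Kq (s n)) ->
  (forall k, ord_ge pi (s k.+1 - s k) k.+1) -> vcauchy pi s.
Proof.
move=> hK hst; split=> // N.
have key M j : ord_ge pi (s (M + j)%N - s M) M.+1.
  elim: j => [|j IH]; first by rewrite addn0 subrr; exact: ord_ge0.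
  have -> : s (M + j.+1)%N - s M = (s (M + j).+1 - s (M + j)%N) + (s (M + j)%N - s M).
    by rewrite addnS; ring.
  by apply: (ord_geD pi_prime _ IH); apply: (ord_ge_le pi_prime (hst _)); lia.
exists N => m n hm hn; rewrite vgeE.
have -> : s m - s n = (s (N + (m - N))%N - s N) - (s (N + (n - N))%N - s N).
  by rewrite !subnKC //; ring.
by apply: (ord_ge_le pi_prime (n := N.+1)); [apply: ord_geB | lia].
Qed.

Lemma vnull_scaled c (f F : nat -> algC) : Zi c -> (forall n, F n = c * f n) ->
  (forall N : nat, exists M, forall n, (M <= n)%N -> ord_ge pi (f n) N) -> vnull pi F.
Proof.
move=> hc eF hf N; have [M hM] := hf N; exists M => n hn; rewrite eF.
by have := ord_geM pi_prime (ord_ge_Zi pi_prime hc) (hM _ hn); rewrite add0r vgeE.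
Qed.

End PiAdicSequences.

Lemma loc_solv_assoc pi c (eps : int) (p q : nat) d : gunit c ->
  loc_solv (pi * c) eps p q d -> loc_solv pi eps p q d.
Proof.
move=> [hc [c' [hc' ec']]] [z [w [[hz cz] [hw cw] hn]]].
have tr y (N : nat) : vge (pi * c) y N -> vge pi y N.
  move=> [a [b [ha hb nb ->]]]; exists (c ^+ N * a), b; split=> //.
  - exact/ZiM/ha/ZiX.
  - move=> [e [he eb]]; apply: nb; exists (c' * e); split; first exact: ZiM.
    by rewrite eb -mulrA [c * _]mulrA -ec' mul1r.
  - by rewrite exprMn; ring.
exists z, w; split.
- by split=> // N; have [M hM] := cz N; exists M => m n h1 h2; apply/tr/hM.
- by split=> // N; have [M hM] := cw N; exists M => m n h1 h2; apply/tr/hM.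
by move=> N; have [M hM] := hn N; exists M => n h; apply/tr/hM.
Qed.

Fixpoint newton_sqrt (u s0 : algC) (k : nat) : algC :=
  if k is k'.+1 then let s := newton_sqrt u s0 k' in s - (s ^+ 2 - u) / (2 * s) else s0.

Section Hensel.

Variables (pi u s0 : algC) (e n0 : nat).
Hypotheses (pi_prime : gprime pi) (ord2 : ord_eq pi 2 e) (u_Kq : Kq u) (s0_Kq : Kq s0).
Hypotheses (ord_s0 : ord_eq pi s0 0) (ord_s0u : ord_ge pi (s0 ^+ 2 - u) n0).
Hypothesis n0_big : (2 * e + 1 <= n0)%N.

(* A Newton step for [X^2 - u] at a unit [s] gains [ord (s^2 - u) - 2 ord 2 >= 1] orders. *)
Lemma newton_step s (n : nat) : Kq s -> ord_eq pi s 0 -> ord_ge pi (s ^+ 2 - u) n ->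
  (2 * e + 1 <= n)%N ->
  let s' := s - (s ^+ 2 - u) / (2 * s) in
  [/\ Kq s', ord_eq pi s' 0, ord_ge pi (s' ^+ 2 - u) n.+1 & ord_ge pi (s' - s) (n - e)%N].
Proof.
move=> hs vs ws hn s'; have s_neq0 := ord_eq_neq0 pi_prime vs.
have hd : ord_ge pi ((s ^+ 2 - u) / (2 * s)) (n%:Z - (e%:Z + 0)).
  exact/ord_ge_div/ord_eqM.
split.
- apply/KqB/Kq_div/KqM => //; [exact/KqB/u_Kq/KqM | exact/Kq_Zi/(Zi_nat 2)].
- by apply: (ord_eqD_lt pi_prime vs (ord_geN hd)); lia.
- have -> : s' ^+ 2 - u = ((s ^+ 2 - u) / (2 * s)) ^+ 2 by rewrite /s'; field; rewrite s_neq0.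
  by rewrite expr2; apply: (ord_ge_le pi_prime (ord_geM pi_prime hd hd)); lia.
by rewrite /s' addrAC subrr add0r; apply: (ord_ge_le pi_prime (ord_geN hd)); lia.
Qed.

Lemma newton_sqrt_inv k :
  [/\ Kq (newton_sqrt u s0 k), ord_eq pi (newton_sqrt u s0 k) 0,
      ord_ge pi (newton_sqrt u s0 k ^+ 2 - u) (n0 + k)%N &
      ord_ge pi (newton_sqrt u s0 k.+1 - newton_sqrt u s0 k) k.+1].
Proof.
suff base : [/\ Kq (newton_sqrt u s0 k), ord_eq pi (newton_sqrt u s0 k) 0 &
                ord_ge pi (newton_sqrt u s0 k ^+ 2 - u) (n0 + k)%N].
  have [b1 b2 b3] := base; have [_ _ _ h] := newton_step b1 b2 b3 ltac:(lia).
  by split=> //; apply: (ord_ge_le pi_prime h); lia.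
elim: k => [|k [IH1 IH2 IH3]]; first by rewrite addn0.
by have [? ? ? _] := newton_step IH1 IH2 IH3 ltac:(lia); rewrite addnS.
Qed.

Lemma newton_sqrt_cauchy : vcauchy pi (newton_sqrt u s0).
Proof. by apply: vcauchy_steps => // k; have [] := newton_sqrt_inv k. Qed.

Lemma newton_sqrt_sqr (N : nat) : exists M, forall n, (M <= n)%N ->
  ord_ge pi (newton_sqrt u s0 n ^+ 2 - u) N.
Proof.
by exists N => n hn; have [_ _ h _] := newton_sqrt_inv n; apply: (ord_ge_le pi_prime h); lia.
Qed.

End Hensel.

(** * Local points on [C_i] *)

Section LocalPoints.

Variables (eps : int) (p q : nat).

(* With [z = 0], the curve [C_i] reads [i w^2 = -1], i.e. [w^2 = i]. *)
Lemma loc_solv_i_sqrt pi s0 : gprime pi -> ~ gdvd pi 2 -> Zi s0 ->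
  gdvd pi (s0 ^+ 2 - 'i) -> loc_solv pi eps p q 'i.
Proof.
move=> hp n2 hs h.
have ord_s0 : ord_eq pi s0 0.
  apply: (ord_eq_Zi hp hs) => hd; apply: (gprime_ndvd_i hp).
  have -> : 'i = s0 * s0 - (s0 ^+ 2 - 'i) by rewrite expr2; ring.
  by apply: gdvdB h; apply: gdvdMr.
have ord_s0i := (ord_ge1P hp (ZiB (ZiX 2 hs) Zi_i)).2 h.
have ord2 := ord_eq_Zi hp (Zi_nat 2) n2.
exists (fun _ => 0), (newton_sqrt 'i s0); split.
- exact/vcauchy_const/Kq_Zi/Zi0.
- exact: newton_sqrt_cauchy hp ord2 (Kq_Zi Zi_i) (Kq_Zi hs) ord_s0 ord_s0i isT.
apply: (vnull_scaled hp Zi_i (f := fun n => newton_sqrt 'i s0 n ^+ 2 - 'i)).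
  by move=> n; rewrite /Cd_eq expr0n /=; ring: (mulCii algC).
exact: newton_sqrt_sqr hp ord2 (Kq_Zi Zi_i) (Kq_Zi hs) ord_s0 ord_s0i isT.
Qed.

Lemma loc_solv_inert : prime p -> (p %% 4 = 3)%N -> loc_solv p%:R eps p q 'i.
Proof.
move=> hp p4; have [x [e1|e1]] := Fp_two_sqr_sign hp p4.
- apply: (loc_solv_i_sqrt (gprime_inert hp p4) (inert_ndvd2 hp p4) (s0 := x%:~R + 'i * x%:~R)).
    by exists x, x.
  have -> : (x%:~R + 'i * x%:~R) ^+ 2 - 'i = (0 : int)%:~R + 'i * (2 * x ^+ 2 - 1)%:~R :> algC.
    by rewrite !(rmorphB, rmorphM, rmorphXn) /=; ring: (mulCii algC).
  by rewrite gdvd_natP dvdz0 (Fp_dvdz hp) rmorphB /= e1 subrr.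
apply: (loc_solv_i_sqrt (gprime_inert hp p4) (inert_ndvd2 hp p4) (s0 := (- x)%:~R + 'i * x%:~R)).
  by exists (- x), x.
have -> : ((- x)%:~R + 'i * x%:~R) ^+ 2 - 'i =
          (0 : int)%:~R + 'i * (- (2 * x ^+ 2) - 1)%:~R :> algC.
  by rewrite !(rmorphB, rmorphN, rmorphM, rmorphXn) /=; ring: (mulCii algC).
by rewrite gdvd_natP dvdz0 (Fp_dvdz hp) rmorphB rmorphN /= e1 opprK subrr.
Qed.

Lemma loc_solv_split nu r : prime q -> odd q -> (q %% 8 = 1)%N -> Zi nu ->
  q%:R = nu * nu^* -> (r%:~R : 'F_q) ^+ 2 = -1 -> gdvd nu ('i - r%:~R) ->
  loc_solv nu eps p q 'i.
Proof.
move=> hq oq q8 hnu nu_norm hr hir.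
have [y hy] := Fp_sqrtN1_sqr hq oq hr q8; have [x hx] := Fp_int y.
have hp := gprime_split hq hnu nu_norm hr hir.
apply: (loc_solv_i_sqrt hp (split_ndvd2 hq oq hnu nu_norm) (Zi_int x)).
have -> : (x%:~R : algC) ^+ 2 - 'i = (x ^+ 2 - r)%:~R - ('i - r%:~R).
  by rewrite rmorphB rmorphXn /=; ring.
apply: gdvdB hir; apply/(split_dvd_intP hq hnu nu_norm).
by rewrite (Fp_dvdz hq) rmorphB rmorphXn /= hx hy subrr.
Qed.

(* [2 = i (1 - i)^2] and [i^2 - (eps (p + 1) - 1) = -8 eps t], so Hensel's lemma applies
   to [u = eps (p + 1) - 1] at [s0 = i]; then [z = (1 + i) / 2], [w = (1 - i) s]. *)
Lemma loc_solv_1i (t : int) : (p.+1)%:Z = 8 * t -> q = (p + 2)%N ->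
  loc_solv (1 - 'i) eps p q 'i.
Proof.
move=> ept ->; set u : algC := (eps * (p.+1)%:Z - 1)%:~R.
have hp := gprime_1i.
have n1i_i : ~ gdvd (1 - 'i) 'i by exact: gprime_ndvd_i.
have ord2 : ord_eq (1 - 'i) 2 2%N.
  exists 'i, 1; split; [exact: Zi_i | exact: Zi1 | done | exact: gprime_ndvd1 hp |].
  by rewrite -exprnP divr1; ring: (mulCii algC).
have ord_i := ord_eq_Zi hp Zi_i n1i_i.
have ord_iu : ord_ge (1 - 'i) ('i ^+ 2 - u) 6%N.
  exists ('i * (eps * t)%:~R), 1.
  split; [exact/ZiM/Zi_int/Zi_i | exact: Zi1 | exact: gprime_ndvd1 hp |].
  have e1 : ((p.+1)%:Z%:~R : algC) = 8 * t%:~R by rewrite ept rmorphM.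
  by rewrite -exprnP divr1 /u !(rmorphB, rmorphM) /= e1; ring: (mulCii algC).
have Ku : Kq u by exact/Kq_Zi/Zi_int.
exists (fun _ => (1 + 'i) / 2), (fun n => (1 - 'i) * newton_sqrt u 'i n); split.
- apply: (vcauchy_const hp); exists 2^-1, 2^-1.
  by rewrite fmorphV /= -[2 : rat]/(2%:R) rmorph_nat; field.
- apply: (vcauchyMl hp); first exact/ZiB/Zi_i/Zi1.
  exact: newton_sqrt_cauchy hp ord2 Ku (Kq_Zi Zi_i) ord_i ord_iu isT.
apply: (vnull_scaled hp (Zi_nat 2) (f := fun n => newton_sqrt u 'i n ^+ 2 - u)) => [n|].
  rewrite /Cd_eq /u !(rmorphB, rmorphM) /= natrD.
  have hp1 : ((p.+1)%:Z%:~R : algC) = p%:R + 1 by rewrite natzR mulrSr.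
  by rewrite hp1; field: (mulCii algC).
exact: newton_sqrt_sqr hp ord2 Ku (Kq_Zi Zi_i) ord_i ord_iu isT.
Qed.

End LocalPoints.

(** * The Selmer group *)

Lemma not_selmer_ord_odd pi (eps : int) (p q : nat) (j : int) d :
  gprime pi -> gdvd pi (2 * p * q)%:R -> ord_eq pi 4 (4 * j) ->
  ord_ge pi (2 * eps%:~R * (p + q)%:R) (2 * j) -> ord_odd pi d -> ~ selmer_phi eps p q d.
Proof.
move=> hp hdvd h4 hA /ord_oddE [k [hd ok]] [_ _ hloc].
by apply: (no_point_odd_order hp h4 hA _ hd ok); last exact: hloc.
Qed.

Lemma not_selmer_ord_odd_ndvd2 pi (eps : int) (p q : nat) d :
  gprime pi -> gdvd pi (2 * p * q)%:R -> ~ gdvd pi 2 -> ord_odd pi d -> ~ selmer_phi eps p q d.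
Proof.
move=> hp hdvd n2; apply: (not_selmer_ord_odd (j := 0)) => //.
  exact/(ord_eq_Zi hp (Zi_nat 4))/gprime_ndvd2_odd.
by apply: (ord_ge_Zi hp); apply/ZiM/Zi_nat/ZiM/Zi_int; exact: (Zi_nat 2).
Qed.

Lemma not_selmer_ord_odd_1i (eps : int) (p q : nat) d :
  ord_odd (1 - 'i) d -> ~ selmer_phi eps p q d.
Proof.
have hp := gprime_1i; apply: (not_selmer_ord_odd (j := 1)) => //.
- exists ((1 + 'i) * (p * q)%:R); split; first exact/ZiM/Zi_nat/ZiD/Zi_i/Zi1.
  by rewrite !natrM; ring: (mulCii algC).
- exists (-1), 1; split; [exact/ZiN/Zi1 | exact: Zi1 | | exact: gprime_ndvd1 hp |].
    by move=> /gdvdN; rewrite opprK; exact: gprime_ndvd1 hp.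
  by rewrite mulr1 -exprnP divr1; ring: (mulCii algC).
exists ('i * (eps * (p + q)%:Z)%:~R), 1.
split; [exact/ZiM/Zi_int/Zi_i | exact: Zi1 | exact: gprime_ndvd1 hp |].
by rewrite mulr1 -exprnP divr1 intrM natzR; ring: (mulCii algC).
Qed.

Lemma Cd_eq_i_twin (eps : int) (p : nat) z w : eps ^+ 2 = 1 ->
  Cd_eq eps p (p + 2) 'i z w =
  'i * w ^+ 2 - ((2 * z ^+ 2 - (eps * (p.+1)%:Z)%:~R * 'i) ^+ 2 + (p * (p + 2))%:R).
Proof.
move=> /(congr1 (fun e : int => e%:~R : algC)); rewrite rmorphXn rmorph1 /= => heps2.
rewrite /Cd_eq rmorphM /= !natrM !natrD natzR -addn1 natrD; ring: (mulCii algC) heps2.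
Qed.

Section TwinSplitPrime.

Variables (p : nat) (nu : algC) (r : int).
Hypotheses (q_prime : prime (p + 2)) (q8 : ((p + 2) %% 8 = 5)%N) (p_gt0 : (0 < p)%N).
Hypotheses (nu_Zi : Zi nu) (nu_norm : (p + 2)%:R = nu * nu^*).
Hypotheses (r_sqrtN1 : (r%:~R : 'F_(p + 2)) ^+ 2 = -1) (nu_dvd_ir : gdvd nu ('i - r%:~R)).

Let q_odd : odd (p + 2). Proof. by lia. Qed.
Let nu_prime : gprime nu := gprime_split q_prime nu_Zi nu_norm r_sqrtN1 nu_dvd_ir.

Lemma ord_twin_prod : ord_eq nu (p * (p + 2))%:R 1.
Proof.
have np : ~ gdvd nu p%:R.
  by move/(split_dvd_intP q_prime nu_Zi nu_norm p); rewrite dvdzE /= => /(dvdn_leq p_gt0); lia.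
have -> : (p * (p + 2))%:R = p%:R * nu^* * nu :> algC by rewrite natrM nu_norm; ring.
have hpc : ord_eq nu (p%:R * nu^*) 0.
  apply: (ord_eq_Zi nu_prime (ZiM (Zi_nat p) (ZiC nu_Zi))).
  apply: (gprime_ndvdM nu_prime (Zi_nat p) (ZiC nu_Zi) np).
  exact: split_ndvd_conj q_prime q_odd nu_Zi nu_norm.
have hnu : ord_eq nu nu 1.
  have hn1 := gprime_ndvd1 nu_prime.
  exists 1, 1; split; [exact: Zi1 | exact: Zi1 | done | done |].
  by rewrite expr1z mulr1 divr1.
by rewrite -[X in ord_eq _ _ X]add0r; apply: (ord_eqM nu_prime hpc hnu).
Qed.

Lemma ord_sqr_add_twin Y : Kq Y ->
  ord_eq nu (Y ^+ 2 + (p * (p + 2))%:R) 1 \/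
  exists y, [/\ y <= 0, ord_eq nu Y y & ord_eq nu (Y ^+ 2 + (p * (p + 2))%:R) (y * 2%:Z)].
Proof.
move=> hY; have hP := ord_twin_prod.
have [->|Y0] := eqVneq Y 0; first by left; rewrite expr0n add0r.
have [y hy] := ord_eq_exists nu_prime hY Y0; have hY2 := ord_eqX nu_prime 2 hy.
have [y0|y0] := ltrP 0 y.
  by left; rewrite addrC; apply: (ord_eqD_lt nu_prime hP (ord_eq_ge hY2)); lia.
by right; exists y; split=> //; apply: (ord_eqD_lt nu_prime hY2 (ord_eq_ge hP)); lia.
Qed.

Lemma split_i_nonsqr_ord s : ord_eq nu s 0 -> ~ ord_ge nu ('i * s ^+ 2 - 1) 1.
Proof.
move=> [a [b [ha hb na nb ->]]] h; rewrite expr0z mul1r in h.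
apply: (split_i_nonsqr q_prime q_odd nu_Zi nu_norm r_sqrtN1 nu_dvd_ir q8 ha hb na nb).
apply/(ord_ge1P nu_prime); first by apply/ZiB/ZiX/hb/ZiM/ZiX/ha/Zi_i.
have -> : 'i * a ^+ 2 - b ^+ 2 = b ^+ 2 * ('i * (a / b) ^+ 2 - 1).
  by field; rewrite (gdvd_neq0 nb).
by rewrite -[1 : int]add0r; apply: (ord_geM nu_prime (ord_ge_Zi nu_prime (ZiX 2 hb)) h).
Qed.

(* Reducing [i w^2 = Y^2 + p (p + 2)] at [nu]: the right side has order [1] or [2 ord Y <= 0];
   the first is odd, and the second forces [i] to be a square modulo [nu]. *)
Lemma not_loc_solv_twin (eps : int) : (eps = 1 \/ eps = -1) -> ~ loc_solv nu eps p (p + 2) 'i.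
Proof.
move=> heps [z [w [[hz _] [hw _] hn]]].
have [M /(_ M (leqnn M))] := hn 2%N.
rewrite vgeE Cd_eq_i_twin; last by case: heps => ->.
set Y := 2 * z M ^+ 2 - _; set P := (p * (p + 2))%:R => hX.
have KY : Kq Y.
  apply/KqB/KqM/Kq_Zi/Zi_i; last exact/Kq_Zi/Zi_int.
  by apply/KqM/KqM/hz/hz/Kq_Zi; exact: (Zi_nat 2).
have w_neq0 n : ord_eq nu (Y ^+ 2 + P) n -> n < 2 -> w M != 0.
  move=> hS n2; apply/eqP => w0; move: hX; rewrite w0 expr0n mulr0 sub0r.
  by move/(ord_eq_ge_le nu_prime (ord_eqN hS)); lia.
have ord_iw u : ord_eq nu (w M) u -> ord_eq nu ('i * w M ^+ 2) (0 + u * 2%:Z).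
  by move=> hu; apply: (ord_eqM nu_prime (ord_eq_unit nu_prime gunit_i) (ord_eqX nu_prime 2 hu)).
case: (ord_sqr_add_twin KY) => [hS | [y [y0 hY hS]]].
  have [u hu] := ord_eq_exists nu_prime (hw M) (w_neq0 _ hS isT).
  by move: hX => /(ord_geB_neq nu_prime (ord_iw _ hu) hS); lia.
have [u hu] := ord_eq_exists nu_prime (hw M) (w_neq0 _ hS ltac:(lia)).
have [uy|uy] := eqVneq u y; last first.
  by move: hX => /(ord_geB_neq nu_prime (ord_iw _ hu) hS); lia.
have Y0 := ord_eq_neq0 nu_prime hY.
apply: (split_i_nonsqr_ord (s := w M / Y)).
  by have := ord_eqM nu_prime hu (ord_eqV hY); rewrite uy subrr.
have -> : 'i * (w M / Y) ^+ 2 - 1 = ('i * w M ^+ 2 - (Y ^+ 2 + P) + P) / Y ^+ 2.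
  by field; rewrite Y0.
have hnum : ord_ge nu ('i * w M ^+ 2 - (Y ^+ 2 + P) + P) 1.
  have hP : ord_ge nu P 1 := ord_eq_ge ord_twin_prod.
  exact: (ord_geD nu_prime (ord_ge_le nu_prime (m := 1) hX ltac:(lia)) hP).
by apply: (ord_ge_le nu_prime (ord_ge_div nu_prime hnum (ord_eqX nu_prime 2 hY))); lia.
Qed.

End TwinSplitPrime.

Lemma gprime_dvd_2pq pi (p q : nat) mu : gprime pi -> Zi mu -> q%:R = mu * mu^* ->
  gdvd pi (2 * p * q)%:R -> [\/ gdvd pi (1 - 'i), gdvd pi p%:R, gdvd pi mu | gdvd pi mu^*].
Proof.
move=> hp hmu hq; have Z1i := ZiB Zi1 Zi_i; have Zmus := ZiC hmu.
have Zpq : Zi (p%:R * (mu * mu^*)) by exact/ZiM/ZiM/Zmus/hmu/Zi_nat.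
have -> : (2 * p * q)%:R = (1 - 'i) * ((1 - 'i) * ('i * (p%:R * (mu * mu^*)))) :> algC.
  by rewrite !natrM hq; ring: (mulCii algC).
case/(gprimeP hp Z1i (ZiM Z1i (ZiM Zi_i Zpq))) => [|]; first by constructor 1.
case/(gprimeP hp Z1i (ZiM Zi_i Zpq)) => [|]; first by constructor 1.
case/(gprimeP hp Zi_i Zpq) => [/(gprime_ndvd_i hp) [] |].
case/(gprimeP hp (Zi_nat p) (ZiM hmu Zmus)) => [|]; first by constructor 2.
by case/(gprimeP hp hmu Zmus); [constructor 3 | constructor 4].
Qed.

Lemma loc_solv_gprime_dvd pi X (eps : int) (p q : nat) d : gprime pi -> gprime X ->
  gdvd pi X -> loc_solv X eps p q d -> loc_solv pi eps p q d.
Proof. by move=> hp hX /(gprime_assoc hp hX) [c [hc ->]]; apply: loc_solv_assoc. Qed.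

Lemma not_selmer_ord_odd_split nu (eps : int) (p q : nat) d : prime q -> odd q -> Zi nu ->
  q%:R = nu * nu^* -> ord_odd nu d -> ~ selmer_phi eps p q d.
Proof.
move=> hq oq hnu hqnu; have [r [hr hir]] := split_root hq hnu hqnu.
apply: (not_selmer_ord_odd_ndvd2 (gprime_split hq hnu hqnu hr hir) _ (split_ndvd2 hq oq hnu hqnu)).
exact: split_dvd_mul hnu hqnu (2 * p).
Qed.

Lemma not_selmer_ord_odd_inert (eps : int) (p q : nat) d : prime p -> (p %% 4 = 3)%N ->
  ord_odd p%:R d -> ~ selmer_phi eps p q d.
Proof.
move=> hp p4; apply: (not_selmer_ord_odd_ndvd2 (gprime_inert hp p4) _ (inert_ndvd2 hp p4)).
by exists (2 * q)%:R; split; [exact: Zi_nat | rewrite !natrM; ring].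
Qed.

Lemma not_ord_odd_unit pi u : gprime pi -> gunit u -> ~ ord_odd pi u.
Proof.
move=> hp hu /ord_oddE [k [hk ok]].
by move: ok; rewrite (ord_eq_uniq hp hk (ord_eq_unit hp hu)).
Qed.

Lemma selmer_i_iff (p q : nat) (mu : algC) (eps : int) :
  prime p -> prime q -> q = (p + 2)%N -> (p %% 4 = 3)%N -> Zi mu -> q%:R = mu * mu^* ->
  (eps = 1 \/ eps = -1) -> selmer_phi eps p q 'i <-> (p %% 8 = 7)%N.
Proof.
move=> hp + q_twin; rewrite q_twin => hq p4 hmu hqmu heps; have oq : odd (p + 2) by lia.
have hmus := ZiC hmu; have hqmus : (p + 2)%:R = mu^* * mu^*^* by rewrite conjCK mulrC.
have [r [hr hir]] := split_root hq hmu hqmu; have [rs [hrs hirs]] := split_root hq hmus hqmus.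
have mu_prime := gprime_split hq hmu hqmu hr hir.
have mus_prime := gprime_split hq hmus hqmus hrs hirs.
split=> [[_ _ hloc] | p7].
  have [//|p7] := eqVneq (p %% 8)%N 7%N; exfalso.
  have q8 : ((p + 2) %% 8 = 5)%N by lia.
  apply: (not_loc_solv_twin hq q8 (prime_gt0 hp) hmu hqmu hr hir heps).
  exact: hloc mu mu_prime (split_dvd_mul hmu hqmu (2 * p)).
have q8 : ((p + 2) %% 8 = 1)%N by lia.
split.
- by split=> [||pi hpi _]; [exact/Kq_Zi/Zi_i | exact: neq0Ci | exact: not_ord_odd_unit hpi gunit_i].
- by exists 0, (sqrtC 'i); rewrite /Cd_eq sqrtCK; ring.
move=> pi hpi /(gprime_dvd_2pq hpi hmu hqmu) [] hdvd.
- apply: (loc_solv_gprime_dvd hpi gprime_1i hdvd).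
  apply: (loc_solv_1i _ _ (t := (p %/ 8)%N.+1%:Z)) erefl.
  by have := divn_eq p 8; rewrite p7; lia.
- apply: (loc_solv_gprime_dvd hpi (gprime_inert hp p4) hdvd); exact: loc_solv_inert.
- apply: (loc_solv_gprime_dvd hpi mu_prime hdvd); exact: loc_solv_split hq oq q8 hmu hqmu hr hir.
apply: (loc_solv_gprime_dvd hpi mus_prime hdvd); exact: loc_solv_split hq oq q8 hmus hqmus hrs hirs.
Qed.

Theorem proposition2p9 (p q : nat) (mu : algC) (eps : int) :
  prime p -> prime q -> odd p -> odd q -> q = (p + 2)%N -> (p %% 4 = 3)%N ->
  girred mu -> girred mu^* -> q%:R = mu * mu^* ->
  (eps = 1 \/ eps = -1) ->
  (forall d : algC, in_KS2 p q d ->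
     (ord_odd mu d \/ ord_odd mu^* d \/ ord_odd p%:R d \/ ord_odd (1 - 'i) d) ->
     ~ selmer_phi eps p q d)
  /\ (selmer_phi eps p q 'i <-> (p %% 8 = 7)%N).
Proof.
move=> hp hq _ oq q_twin p4 [hmu _ _ _] [hmus _ _ _] hqmu heps.
split; last exact: selmer_i_iff hp hq q_twin p4 hmu hqmu heps.
have hqmus : q%:R = mu^* * mu^*^* by rewrite conjCK mulrC.
move=> d _ [h|[h|[h|h]]].
- exact: not_selmer_ord_odd_split hq oq hmu hqmu h.
- exact: not_selmer_ord_odd_split hq oq hmus hqmus h.
- exact: not_selmer_ord_odd_inert hp p4 h.
exact: not_selmer_ord_odd_1i h.
Qed.
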